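(* Let $a$ and $b$ be relatively prime integers with $1<a<b$, let $(u,v)$ be the definitely least solution of $ax+by=1$, let $S=\langle a,b\rangle$ and $h=\min I(S)$. Then there are exactly $|v|$ minimal isolated gaps modulo $a$ of $I(S)$, namely $h,\ h+b,\ \dots,\ h+(|v|-1)b$.
   Context: $\langle a,b\rangle=\{\lambda_1a+\lambda_2b:\lambda_1,\lambda_2\in\mathbb{N}\}$. $I(S)$ is the set of isolated gaps of $S$ ($x\in\mathbb{N}\setminus S$ with $x-1,x+1\in S$), and for $i\in\{1,\dots,a-1\}$, $I_{i,a}(S)=\{s\in I(S):s\equiv i\pmod a\}$. For each $i$ with $I_{i,a}(S)\neq\varnothing$, $h_i=\min I_{i,a}(S)$ is called a minimal isolated gap modulo $a$ of $I(S)$. The definitely least solution $(u,v)$ of $ax+by=1$ is the unique integer solution with $|u|,|v|$ minimal; equivalently the one with $|u|\le b/2$, $|v|\le a/2$. *)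

From mathcomp Require Import all_boot all_order all_algebra.
Set Implicit Arguments. Unset Strict Implicit. Unset Printing Implicit Defensive.
Import Order.TTheory GRing.Theory Num.Theory.

Definition in_sg2 (a b x : nat) : Prop := exists l1 l2 : nat, x = l1 * a + l2 * b.

Definition isolated_gap (S : nat -> Prop) (x : nat) : Prop :=
  0 < x /\ ~ S x /\ S x.-1 /\ S x.+1.

Definition minimal_isolated_gap_mod (S : nat -> Prop) (a y : nat) : Prop :=
  exists i : nat, [/\ 1 <= i <= a - 1,
    isolated_gap S y /\ y %% a = i &
    forall z, isolated_gap S z -> z %% a = i -> y <= z].

From mathcomp Require Import all_boot all_order all_algebra.
From mathcomp Require Import zify.
Import Order.TTheory GRing.Theory Num.Theory.
Set Implicit Arguments. Unset Strict Implicit.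

(* Write c = |u| and w = |v|, so that c a and w b differ by one.  A number
   x = q b - p a with a - w <= q < a and 0 < p <= c is not in <a,b> (as a does
   not divide q b), while x + (w b - c a) = (b - p - c) a + (q + w - a) b and
   x - (w b - c a) = (c - p) a + (q - w) b are; conversely, reducing a
   representation of a neighbour of an isolated gap shows that every isolated gap
   has this form.  The residue of x modulo a determines q, and for fixed q the
   least such gap is q b - c a, so the minimal isolated gaps modulo a are the w
   numbers h + k b, k < w, with h = (a - w) b - c a = min I(S). *)

Lemma dvdn_mull_coprime_eq0 a b n : coprime a b -> n < a -> a %| n * b -> n = 0.
Proof.
move=> coprime_ab n_lt_a; rewrite Gauss_dvdl //.
by case: (posnP n) => // n_gt0 /(dvdn_leq n_gt0); lia.
Qed.

Lemma coprime_mull_modn_inj a b q1 q2 : coprime a b -> q1 < a -> q2 < a ->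
  q1 * b = q2 * b %[mod a] -> q1 = q2.
Proof.
move=> coprime_ab.
wlog le_q12 : q1 q2 / q1 <= q2.
  by move=> IH lt1 lt2 eq12; case: (leqP q1 q2) => [|/ltnW] le;
    [exact: IH | apply/esym/IH].
move=> _ q2_lt_a /eqP; rewrite eq_sym eqn_mod_dvd ?leq_mul2r ?le_q12 ?orbT //.
rewrite -mulnBl => /(dvdn_mull_coprime_eq0 coprime_ab); lia.
Qed.

Lemma in_sg2_reduced a b y : 0 < a -> in_sg2 a b y ->
  exists m1 m2, m2 < a /\ y = m1 * a + m2 * b.
Proof.
move=> a_gt0 [l1 [l2 ->]]; exists (l1 + l2 %/ a * b), (l2 %% a).
by rewrite ltn_mod a_gt0 {1}(divn_eq l2 a); split => //; lia.
Qed.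

Lemma notin_sg2 a b x p q : coprime a b -> 0 < p -> q < a ->
  x + p * a = q * b -> ~ in_sg2 a b x.
Proof.
move=> coprime_ab p_gt0 q_lt_a eq_x [l1 [l2 def_x]]; subst x.
have le_l2q : l2 <= q by nia.
have eq_l : (l1 + p) * a = (q - l2) * b by rewrite mulnBl; lia.
have dvd_a : a %| (q - l2) * b by rewrite -eq_l dvdn_mull.
have q_l2 : q - l2 = 0 by apply: (dvdn_mull_coprime_eq0 coprime_ab _ dvd_a); lia.
by move/eqP: eq_l; rewrite q_l2 mul0n muln_eq0; lia.
Qed.

Section IsolatedGaps.

Variables a b c w : nat.
Hypotheses (a_gt1 : 1 < a) (a_lt_b : a < b) (coprime_ab : coprime a b).
Hypotheses (w_gt0 : 0 < w) (w_le : w * 2 <= a) (c_le : c * 2 <= b).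

Definition gap_coords (x : nat) : Prop :=
  exists q p, [/\ a - w <= q, q < a, 0 < p, p <= c & x + p * a = q * b].

Lemma gap_coords_notin x : gap_coords x -> ~ in_sg2 a b x.
Proof. by move=> [q [p [_ q_lt_a p_gt0 _ eq_x]]]; exact: notin_sg2 eq_x. Qed.

Lemma gap_coords_neighbours x y z :
  x + w * b = y + c * a -> z + w * b = x + c * a ->
  gap_coords x -> in_sg2 a b y /\ in_sg2 a b z.
Proof.
move=> eq_y eq_z [q [p [q_ge q_lt_a p_gt0 p_le eq_x]]]; split.
  by exists (b - p - c), (q + w - a); rewrite !mulnBl; nia.
by exists (c - p), (q - w); rewrite !mulnBl; nia.
Qed.

Lemma neighbours_gap_coords x y z :
  x + w * b = y + c * a -> z + w * b = x + c * a ->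
  in_sg2 a b y -> in_sg2 a b z -> ~ in_sg2 a b x -> gap_coords x.
Proof.
move=> eq_y eq_z Sy Sz notSx.
have [m1 [m2 [m2_lt_a def_y]]] := in_sg2_reduced (ltnW a_gt1) Sy.
have m2_lt_w : m2 < w.
  rewrite ltnNge; apply/negP => le_wm2; apply: notSx.
  by exists (m1 + c), (m2 - w); rewrite mulnBl; nia.
have m1c_lt_b : m1 + c < b.
  rewrite ltnNge; apply/negP => le_bm1c; apply: notSx.
  by exists (m1 + c - b), (m2 + a - w); rewrite !mulnBl; nia.
have eq_x : x + (b - (m1 + c)) * a = (m2 + a - w) * b by rewrite !mulnBl; nia.
exists (m2 + a - w), (b - (m1 + c)); split; try lia.
(* if p > c then z = (m2 + a - 2w) b - (p - c) a could not lie in <a,b> *)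
rewrite leqNgt; apply/negP => lt_c.
apply: (@notin_sg2 a b z (b - (m1 + c) - c) (m2 + a - w - w) coprime_ab _ _ _ Sz);
  try lia.
by rewrite !mulnBl; rewrite !mulnBl in eq_x; nia.
Qed.

Hypothesis bezout_cw : c * a + 1 = w * b \/ w * b + 1 = c * a.

Lemma isolated_gapP x : isolated_gap (in_sg2 a b) x <-> gap_coords x.
Proof.
split=> [[x_gt0 [notSx [Sxm Sxp]]] | gx].
  by case: bezout_cw => bez; [apply: (@neighbours_gap_coords x x.+1 x.-1)
    | apply: (@neighbours_gap_coords x x.-1 x.+1)] => //; lia.
have x_gt0 : 0 < x.
  by rewrite lt0n; apply/eqP => x0; apply: (gap_coords_notin gx); exists 0, 0; rewrite x0.
split=> //; split; first exact: gap_coords_notin.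
by case: bezout_cw => bez; [have [] := @gap_coords_neighbours x x.+1 x.-1
  | have [] := @gap_coords_neighbours x x.-1 x.+1] => //; lia.
Qed.

Definition first_gap : nat := (a - w) * b - c * a.

Lemma first_gap_addn : first_gap + c * a = (a - w) * b.
Proof.
apply: subnK; rewrite mulnBl.
have : w * b * 2 <= a * b by rewrite mulnAC leq_mul2r w_le orbT.
have : c * a * 2 <= a * b by rewrite mulnAC [a * b]mulnC leq_mul2r c_le orbT.
by case: bezout_cw => bez; nia.
Qed.

Lemma isolated_gap_first_gapD k : k < w ->
  isolated_gap (in_sg2 a b) (first_gap + k * b).
Proof.
move=> k_lt_w; have c_gt0 : 0 < c by case: bezout_cw; nia.
apply/isolated_gapP; exists (a - w + k), c; split; try lia.
by rewrite mulnDl -first_gap_addn addnAC.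
Qed.

Lemma first_gapD_modn_neq0 k : k < w -> (first_gap + k * b) %% a != 0.
Proof.
move=> k_lt_w; apply/negP; rewrite -/(dvdn a _) => dvd_a.
have dvd_q : a %| (a - w + k) * b.
  by rewrite mulnDl -first_gap_addn addnAC dvdn_add ?dvdn_mull.
have : a - w + k = 0 by apply: (dvdn_mull_coprime_eq0 coprime_ab _ dvd_q); lia.
lia.
Qed.

Lemma isolated_gap_first_gapD_le x : isolated_gap (in_sg2 a b) x ->
  exists2 k, k < w & first_gap + k * b <= x /\ x = first_gap + k * b %[mod a].
Proof.
move=> /isolated_gapP [q [p [q_ge q_lt_a _ p_le eq_x]]].
have eq_k : first_gap + (q - (a - w)) * b + c * a = q * b.
  by rewrite addnAC first_gap_addn -mulnDl subnKC.
have le_pc : p * a <= c * a by rewrite leq_mul2r p_le orbT.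
exists (q - (a - w)); first lia.
split; first lia.
by rewrite -(modnMDl p) -(modnMDl c (first_gap + _)) ![_ * a + _]addnC eq_x eq_k.
Qed.

Lemma min_isolated_gap_eq h : isolated_gap (in_sg2 a b) h ->
  (forall x, isolated_gap (in_sg2 a b) x -> h <= x) -> h = first_gap.
Proof.
move=> gap_h min_h; apply/anti_leq/andP; split.
  by rewrite -[first_gap]addn0 -(mul0n b); apply/min_h/isolated_gap_first_gapD.
by have [k _ [le_h _]] := isolated_gap_first_gapD_le gap_h; lia.
Qed.

Lemma minimal_isolated_gap_modP y :
  minimal_isolated_gap_mod (in_sg2 a b) a y <-> exists2 k, k < w & y = first_gap + k * b.
Proof.
split=> [[i [_ [gap_y mod_y] min_y]] | [k k_lt_w ->]].
  have [k k_lt_w [le_y eq_mod]] := isolated_gap_first_gapD_le gap_y.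
  exists k => //; apply/anti_leq; rewrite le_y andbT.
  by apply: min_y; [exact: isolated_gap_first_gapD | rewrite -eq_mod].
exists ((first_gap + k * b) %% a); split=> //.
- by rewrite lt0n first_gapD_modn_neq0 //=; have := ltn_mod (first_gap + k * b) a; lia.
- by split=> //; exact: isolated_gap_first_gapD.
move=> z gap_z mod_z; have [k' k'_lt_w [le_z eq_mod]] := isolated_gap_first_gapD_le gap_z.
suff -> : k = k' by [].
apply: (coprime_mull_modn_inj coprime_ab); try lia.
by apply/eqP; rewrite -(eqn_modDl first_gap) -eq_mod mod_z.
Qed.

End IsolatedGaps.

Lemma definitely_least_bezout a b (u v : int) : 1 < a ->
  (a%:Z * u + b%:Z * v = 1)%R -> (`|u| * 2 <= b)%N -> (`|v| * 2 <= a)%N ->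
  0 < `|v| /\ (`|u| * a + 1 = `|v| * b \/ `|v| * b + 1 = `|u| * a).
Proof.
move=> a_gt1; case: u => un; case: v => vn /=; try nia.
by rewrite -!PoszM -PoszD => -[]; case: un => [|un]; case: vn => [|vn]; nia.
Qed.

Theorem proposition4p2 (a b : nat) (u v : int) (h : nat) :
  1 < a -> a < b -> coprime a b ->
  (* (u,v) is the definitely least solution of ax + by = 1 *)
  (a%:Z * u + b%:Z * v = 1)%R -> (`|u| * 2 <= b)%N -> (`|v| * 2 <= a)%N ->
  (* h = min I(S) *)
  isolated_gap (in_sg2 a b) h ->
  (forall x, isolated_gap (in_sg2 a b) x -> h <= x) ->
  (forall y, minimal_isolated_gap_mod (in_sg2 a b) a y <->
     y \in [seq h + k * b | k <- iota 0 `|v|]) /\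
  uniq [seq h + k * b | k <- iota 0 `|v|].
Proof.
move=> a_gt1 a_lt_b coprime_ab bezout u_le v_le gap_h min_h.
have [v_gt0 bezout_uv] := definitely_least_bezout a_gt1 bezout u_le v_le.
have -> := min_isolated_gap_eq a_gt1 a_lt_b coprime_ab v_gt0 v_le u_le bezout_uv
  gap_h min_h.
split=> [y | ].
  rewrite (minimal_isolated_gap_modP a_gt1 a_lt_b coprime_ab v_gt0 v_le u_le
    bezout_uv); split=> [[k k_lt_v ->] | /mapP [k]].
    by apply/mapP; exists k; rewrite // mem_iota.
  by rewrite mem_iota => k_lt_v ->; exists k.
have b_gt0 : 0 < b by lia.
by rewrite map_inj_uniq ?iota_uniq // => k1 k2 /addnI /eqP; rewrite eqn_pmul2r // => /eqP.
Qed.
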